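(* Let $X$ be a finite-dimensional simplicial complex and let $\Sigma$ be a maximal simplex of $\mathcal{N}(X)$. Then there is a vertex $x$ of $X$ with $\Sigma=\Sigma_x$. If moreover, for all vertices $a,b$ of $X$, $\Sigma_a\subseteq\Sigma_b$ implies $a=b$, then for every vertex $y$ of $X$, $\Sigma_y$ is a maximal simplex of $\mathcal{N}(X)$.
   Context: A maximal simplex of a simplicial complex $Y$ is a maximal collection of vertices of $Y$ such that every finite subset is a simplex of $Y$. $\mathcal{N}(X)$ is the nerve of the collection of maximal simplices of $X$: its vertices are the maximal simplices of $X$, and a finite set of them is a simplex iff their common intersection is non-empty. For a vertex $x$ of $X$, $\Sigma_x$ is the collection of maximal simplices of $X$ containing $x$. *)

From Stdlib Require Import List.
Import ListNotations.

Definition subset {T : Type} (A B : T -> Prop) : Prop := forall x, A x -> B x.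

Definition finite_set {T : Type} (A : T -> Prop) : Prop :=
  exists l : list T, forall x, A x <-> In x l.

Record simplicial_complex (V : Type) := {
  simplex : (V -> Prop) -> Prop;
  simplex_finite : forall s, simplex s -> finite_set s;
  simplex_nonempty : forall s, simplex s -> exists x, s x;
  simplex_down : forall s t, simplex s -> subset t s -> (exists x, t x) -> simplex t;
  simplex_vertex : forall x : V, simplex (fun y => y = x)
}.
Arguments simplex {V} _ _.

Definition finite_dimensional {V : Type} (X : simplicial_complex V) : Prop :=
  exists d : nat, forall s, simplex X s ->
    exists l : list V, length l <= d /\ forall x, s x <-> In x l.

Definition all_finite_subsets_simplices {T : Type} (simp : (T -> Prop) -> Prop)
  (M : T -> Prop) : Prop :=
  forall s, finite_set s -> (exists x, s x) -> subset s M -> simp s.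

Definition maximal_simplex {T : Type} (simp : (T -> Prop) -> Prop) (M : T -> Prop)
  : Prop :=
  (exists x, M x) /\ all_finite_subsets_simplices simp M /\
  forall M', all_finite_subsets_simplices simp M' -> subset M M' -> subset M' M.

(* Vertices of the nerve N(X): the maximal simplices of X. *)
Definition maxsimp {V : Type} (X : simplicial_complex V) : Type :=
  { M : V -> Prop | maximal_simplex (simplex X) M }.

Definition nerve_simplex {V : Type} (X : simplicial_complex V)
  (S : maxsimp X -> Prop) : Prop :=
  finite_set S /\ (exists m, S m) /\ exists x : V, forall m, S m -> proj1_sig m x.

Definition Sigma {V : Type} (X : simplicial_complex V) (x : V) : maxsimp X -> Prop :=
  fun m => proj1_sig m x.

From Stdlib Require Import List Classical Lia Arith.
Import ListNotations.

(* In a finite-dimensional complex every set all of whose finite subsets are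
   simplices is itself finite (a long duplicate-free list inside it would be a
   simplex of too many vertices). Hence a simplex S of the nerve, whose finite
   subfamilies all have a common vertex, contains a finite member m0; testing
   the finitely many vertices of m0 against S yields a vertex common to all of
   S, so S is contained in some Sigma_x, and equals it if S is maximal.
   Conversely each Sigma_y is a simplex of the nerve, nonempty because a
   longest simplex through y is a maximal simplex; a simplex of the nerve
   containing it lies in some Sigma_x, and then Sigma_y is contained in
   Sigma_x, which forces y = x under the injectivity hypothesis. *)

Lemma finite_set_or_long_NoDup {T : Type} (M : T -> Prop) (n : nat) :
  finite_set M \/ exists l, NoDup l /\ length l = n /\ forall x, In x l -> M x.
Proof.
  induction n as [|n [Hfin | [l [Hnd [Hlen Hincl]]]]]; [| now left |].
  - right; exists []; repeat split; [constructor | intros x []].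
  - destruct (classic (forall x, M x -> In x l)) as [Hall | Hout].
    + left; exists l; split; [apply Hall | apply Hincl].
    + apply not_all_ex_not in Hout as [x Hx].
      apply imply_to_and in Hx as [Mx Nx].
      right; exists (x :: l); repeat split; [constructor; assumption | simpl; lia |].
      intros z [<- | Hz]; auto.
Qed.

Lemma common_point_of_finite_member {I T : Type} (f : I -> T -> Prop)
    (S : I -> Prop) (m0 : I) (l0 : list T) :
  (forall x, f m0 x -> In x l0) ->
  (forall ms, (forall m, In m ms -> S m) ->
     exists x, f m0 x /\ forall m, In m ms -> f m x) ->
  exists x, forall m, S m -> f m x.
Proof.
  intros Hm0 Hfip.
  assert (Hsplit : forall l : list T,
    (exists x, forall m, S m -> f m x) \/
    exists ms, (forall m, In m ms -> S m) /\
      forall x, In x l -> exists m, In m ms /\ ~ f m x).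
  { induction l as [|a l [Hcommon | [ms [Hms Hmiss]]]]; [| now left |].
    - right; exists []; split; intros ? [].
    - destruct (classic (forall m, S m -> f m a)) as [Ha | Hna]; [left; eauto |].
      apply not_all_ex_not in Hna as [m Hm].
      apply imply_to_and in Hm as [Sm Nm].
      right; exists (m :: ms); split.
      + intros m' [<- | Hm']; auto.
      + intros x [<- | Hx]; [exists m; simpl; auto |].
        destruct (Hmiss x Hx) as [m' [Hm' Nm']]; exists m'; simpl; auto. }
  destruct (Hsplit l0) as [Hcommon | [ms [Hms Hmiss]]]; [assumption |].
  destruct (Hfip ms Hms) as [x [Hx Hxms]].
  destruct (Hmiss x (Hm0 x Hx)) as [m [Hm Nm]].
  contradiction (Nm (Hxms m Hm)).
Qed.

Lemma bounded_nat_pred_has_max (P : nat -> Prop) (d : nat) :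
  (exists n, P n) -> (forall n, P n -> n <= d) ->
  exists n, P n /\ forall m, P m -> m <= n.
Proof.
  intros [n0 Pn0] Hbound.
  enough (Hk : forall k n, P n -> d - n <= k -> exists n, P n /\ forall m, P m -> m <= n)
    by exact (Hk _ n0 Pn0 (le_n _)).
  induction k as [|k IH]; intros n Pn Hk.
  - exists n; split; [assumption |]. intros m Pm; specialize (Hbound m Pm); lia.
  - destruct (classic (exists m, P m /\ n < m)) as [[m [Pm Hlt]] | Hno].
    + specialize (Hbound m Pm); apply (IH m Pm); lia.
    + exists n; split; [assumption |]. intros m Pm.
      destruct (Nat.le_gt_cases m n) as [Hle | Hlt]; [assumption |].
      exfalso; apply Hno; eauto.
Qed.

Lemma Sigma_nerve_faces {V : Type} (X : simplicial_complex V) (x : V) :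
  all_finite_subsets_simplices (nerve_simplex X) (Sigma X x).
Proof. intros s Hfin Hne Hsub; repeat split; [assumption | assumption | now exists x]. Qed.

Section FiniteDimensional.

Variables (V : Type) (X : simplicial_complex V) (d : nat).
Hypothesis dim_X : forall s, simplex X s ->
  exists l : list V, length l <= d /\ forall x, s x <-> In x l.

Lemma list_simplex_length_le (l : list V) :
  NoDup l -> simplex X (fun x => In x l) -> length l <= d.
Proof.
  intros Hnd Hs; destruct (dim_X _ Hs) as [l' [Hlen Hiff]].
  enough (length l <= length l') by lia.
  apply NoDup_incl_length; [assumption |]. intros x Hx; apply Hiff, Hx.
Qed.

Lemma list_simplex_of_faces (M : V -> Prop) (l : list V) :
  all_finite_subsets_simplices (simplex X) M -> l <> [] ->
  (forall x, In x l -> M x) ->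
  simplex X (fun x => In x l).
Proof.
  intros HM Hl Hincl; apply HM; [exists l; tauto | | exact Hincl].
  destruct l as [|a l]; [contradiction | exists a; now left].
Qed.

Lemma faces_finite (M : V -> Prop) :
  all_finite_subsets_simplices (simplex X) M -> finite_set M.
Proof.
  intros HM.
  destruct (finite_set_or_long_NoDup M (S d)) as [Hfin | [l [Hnd [Hlen Hincl]]]];
    [assumption | exfalso].
  assert (Hl : l <> []) by (intros ->; discriminate).
  pose proof (list_simplex_length_le l Hnd (list_simplex_of_faces M l HM Hl Hincl)).
  lia.
Qed.

Lemma nerve_faces_common_vertex (Sg : maxsimp X -> Prop) :
  all_finite_subsets_simplices (nerve_simplex X) Sg -> (exists m, Sg m) ->
  exists x, forall m, Sg m -> Sigma X x m.
Proof.
  intros HSg [m0 Hm0].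
  destruct (faces_finite _ (proj1 (proj2 (proj2_sig m0)))) as [l0 Hl0].
  apply (common_point_of_finite_member (fun m => proj1_sig m) Sg m0 l0);
    [intros x; apply Hl0 |].
  intros ms Hms.
  destruct (HSg (fun m => In m (m0 :: ms))) as [_ [_ [x Hx]]].
  - exists (m0 :: ms); tauto.
  - exists m0; now left.
  - intros m [<- | Hm]; auto.
  - exists x; split; [apply Hx; now left | intros m Hm; apply Hx; now right].
Qed.

Lemma vertex_in_maximal_simplex (y : V) : exists m : maxsimp X, Sigma X y m.
Proof.
  set (good := fun l => NoDup l /\ In y l /\ simplex X (fun x => In x l)).
  assert (Hy : good [y]).
  { split; [repeat constructor; intros [] | split; [now left |]].
    apply (simplex_down _ X (fun z => z = y)); [apply simplex_vertex | | exists y; now left].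
    intros x [<- | []]; reflexivity. }
  destruct (bounded_nat_pred_has_max (fun n => exists l, good l /\ length l = n) d)
    as [n [[l [[Hnd [Hyl Hs]] <-]] Hlongest]].
  { exists 1, [y]; auto. }
  { intros n [l [[Hnd [_ Hs]] <-]]; exact (list_simplex_length_le l Hnd Hs). }
  assert (Hmax : maximal_simplex (simplex X) (fun x => In x l)).
  { split; [exists y; exact Hyl | split].
    - intros s _ Hne Hsub; exact (simplex_down _ X _ s Hs Hsub Hne).
    - intros M' HM' Hsub x Hx.
      apply NNPP; intros Hxl.
      assert (Hgood : good (x :: l)).
      { split; [constructor; assumption | split; [now right |]].
        apply (list_simplex_of_faces M'); [assumption | discriminate |].
        intros z [<- | Hz]; auto. }
      specialize (Hlongest _ (ex_intro _ _ (conj Hgood eq_refl))); simpl in Hlongest; lia. }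
  exists (exist _ _ Hmax); exact Hyl.
Qed.

Lemma maximal_nerve_simplex_is_Sigma (Sg : maxsimp X -> Prop) :
  maximal_simplex (nerve_simplex X) Sg ->
  exists x, forall m, Sg m <-> Sigma X x m.
Proof.
  intros [Hne [HSg Hmax]].
  destruct (nerve_faces_common_vertex Sg HSg Hne) as [x Hx].
  exists x; split; [apply Hx | apply (Hmax _ (Sigma_nerve_faces X x) Hx)].
Qed.

Lemma Sigma_maximal_nerve_simplex :
  (forall a b : V, subset (Sigma X a) (Sigma X b) -> a = b) ->
  forall y, maximal_simplex (nerve_simplex X) (Sigma X y).
Proof.
  intros Hinj y.
  destruct (vertex_in_maximal_simplex y) as [m0 Hm0].
  split; [exists m0; exact Hm0 | split; [apply Sigma_nerve_faces |]].
  intros Sg HSg Hsub.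
  destruct (nerve_faces_common_vertex Sg HSg (ex_intro _ m0 (Hsub m0 Hm0))) as [x Hx].
  replace y with x; [exact Hx |].
  symmetry; apply Hinj; intros m Hm; apply Hx, Hsub, Hm.
Qed.

End FiniteDimensional.

Theorem lemma3p4 (V : Type) (X : simplicial_complex V) :
  finite_dimensional X ->
  (forall Sg : maxsimp X -> Prop,
     maximal_simplex (nerve_simplex X) Sg ->
     exists x : V, forall m, Sg m <-> Sigma X x m) /\
  ((forall a b : V, subset (Sigma X a) (Sigma X b) -> a = b) ->
   forall y : V, maximal_simplex (nerve_simplex X) (Sigma X y)).
Proof.
  intros [d dim_X]; split.
  - exact (maximal_nerve_simplex_is_Sigma V X d dim_X).
  - exact (Sigma_maximal_nerve_simplex V X d dim_X).
Qed.
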